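(* Let $q=p^m$ be a prime power with $p$ prime, let $3\le h\le k$ be integers, and $$D_2=\Bigl\{(x_1,\ldots,x_k)\in\mathbb{F}_q^k\setminus\{0\}:\prod_{1\le i<j\le h}(x_i+x_j)=0\Bigr\}.$$ Let $$\Gamma(h,q)=\sum_{s=1}^{\min(h,(q-1)/2)}\frac{(q-1)(q-3)\cdots(q-2s+1)}{s!}\,\mathcal{S}(h,s),$$ where $\mathcal{S}(x,y)$ is the number of surjective functions from a set of size $x$ onto a set of size $y\le x$. Then the length $\#D_2$ of the code $\mathrm{C}_{D_2}$ equals $q^{k-h}\bigl(q^h-q(q-1)\cdots(q-h+1)\bigr)-1$ if $p=2$ and $h\le q$; $q^k-1$ if $p=2$ and $h>q$; and $q^{k-h}\bigl(q^h-\Gamma(h,q)-h\Gamma(h-1,q)\bigr)-1$ if $p>2$.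
   Context: For a finite set $D=\{P_1,\ldots,P_n\}\subseteq\mathbb{F}_q^k$, $\mathrm{C}_D=\{(f(P_1),\ldots,f(P_n)):f:\mathbb{F}_q^k\to\mathbb{F}_q\text{ linear}\}$, a code of length $n=\#D$. *)

From HB Require Import structures.
From mathcomp Require Import all_boot all_order all_algebra all_field.
Set Implicit Arguments. Unset Strict Implicit. Unset Printing Implicit Defensive.
Import GRing.Theory.
Local Open Scope ring_scope.

(* The defining set D2 of the code C_{D2}: nonzero vectors x in F^k with
   prod_{1<=i<j<=h} (x_i + x_j) = 0 (coordinates indexed from 0 here). *)
Definition D2 (F : finFieldType) (k h : nat) : {set 'rV[F]_k} :=
  [set x : 'rV[F]_k | (x != 0) &&
     (\prod_(i : 'I_k) \prod_(j : 'I_k | (i < j)%N && (j < h)%N) (x 0 i + x 0 j) == 0)].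

(* The code C_D = { (f(P_1),...,f(P_n)) : f linear } ; its length is #D. *)
Definition code_length (F : finFieldType) (k : nat) (D : {set 'rV[F]_k}) : nat := #|D|.

Definition nsurj (x y : nat) : nat :=
  #|[set f : {ffun 'I_x -> 'I_y} | [forall j : 'I_y, exists i : 'I_x, f i == j]]|.

Definition Gamma (h q : nat) : rat :=
  \sum_(1 <= s < (minn h ((q - 1) %/ 2)).+1)
     ((\prod_(i < s) ((q%:R : rat) - (2 * i + 1)%:R)) / (s`!)%:R * (nsurj h s)%:R).

From HB Require Import structures.
From mathcomp Require Import all_boot all_order all_algebra all_field.
From mathcomp Require Import zify ring.
Set Implicit Arguments. Unset Strict Implicit. Unset Printing Implicit Defensive.
Import GRing.Theory Num.Theory.
Local Open Scope ring_scope.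

(* Outside D2 and 0 lie exactly the vectors whose first h coordinates have
   pairwise nonzero sums; as only those coordinates matter,
   #D2 = q^k - 1 - q^(k-h) N_h, where N_h counts the maps a : [h] -> F_q with
   a_i + a_j <> 0 for i <> j.  In characteristic 2 this means a is injective,
   so N_h = q (q-1) ... (q-h+1).  In odd characteristic such a map has at most
   one zero value, and deleting it leaves a map with a_i + a_j <> 0 for all
   i, j.  Those maps are counted by their image S, which must be disjoint from
   -S: there are S(h, #S) maps onto a given S, and (q-1)(q-3)...(q-2s+1)/s!
   such sets of size s, whence N_h = Gamma(h,q) + h Gamma(h-1,q). *)

Section RowCounting.
Variable R : finType.

Lemma card_lsubmx_pred m n (P : pred 'rV[R]_m) :
  #|[set x : 'rV[R]_(m + n) | P (lsubmx x)]| = (#|R| ^ n * #|[set u | P u]|)%N.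
Proof.
have -> : [set x : 'rV[R]_(m + n) | P (lsubmx x)] =
    [set row_mx uv.1 uv.2 | uv in setX [set u | P u] [set: 'rV[R]_n]].
  apply/setP => x; rewrite inE; apply/idP/imsetP => [Px | [[u v]]].
  - by exists (lsubmx x, rsubmx x); rewrite ?hsubmxK // !inE Px.
  - by rewrite !inE /= andbT => Pu ->; rewrite row_mxKl.
rewrite card_imset ?cardsX ?cardsT ?card_mx ?mul1n 1?mulnC //.
by move=> [u v] [u' v'] /= /eq_row_mx [-> ->].
Qed.

Lemma card_row_ffun_pred m (P : pred {ffun 'I_m -> R}) :
  #|[set u : 'rV[R]_m | P [ffun i => u 0 i]]| = #|[set a | P a]|.
Proof.
have bij : {on [set a | P a], bijective (fun u : 'rV[R]_m => [ffun i => u 0 i])}.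
  exists (fun a : {ffun 'I_m -> R} => \row_i a i) => [u _ | a _].
  - by apply/rowP => i; rewrite !mxE ffunE.
  - by apply/ffunP => i; rewrite !ffunE mxE.
by rewrite -(on_card_preimset bij); apply: eq_card => u; rewrite !inE.
Qed.

End RowCounting.

Lemma nsurj_small h s : (h < s)%N -> nsurj h s = 0%N.
Proof.
move=> hs; apply/eqP; rewrite cards_eq0; apply/eqP/setP => f; rewrite !inE.
apply/negP => /forallP onto.
have : [set: 'I_s] \subset f @: [set: 'I_h].
  by apply/subsetP => j _; have /existsP [i /eqP <-] := onto j; apply: imset_f.
move/subset_leq_card/leq_trans/(_ (leq_imset_card _ _)).
by rewrite !cardsT !card_ord leqNgt hs.
Qed.

Lemma nsurj0 h : (0 < h)%N -> nsurj h 0 = 0%N.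
Proof.
move=> h_gt0; apply/eqP; rewrite -leqn0; apply: leq_trans (max_card _) _.
by rewrite card_ffun !card_ord exp0n.
Qed.

Lemma card_ffun_image (T : finType) h (S : {set T}) :
  #|[set a : {ffun 'I_h -> T} | [set a i | i : 'I_h] == S]| = nsurj h #|S|.
Proof.
pose embed (g : {ffun 'I_h -> 'I_#|S|}) := [ffun i => enum_val (g i) : T].
have -> : [set a : {ffun 'I_h -> T} | [set a i | i : 'I_h] == S] =
    embed @: [set g : {ffun 'I_h -> 'I_#|S|} | [forall j, exists i, g i == j]].
  apply/setP => a; rewrite inE; apply/eqP/imsetP => [imS | [g]].
  - have aS i : a i \in S by rewrite -imS imset_f.
    exists [ffun i => enum_rank_in (aS i) (a i)].
    + rewrite inE; apply/forallP => j.
      have : enum_val j \in [set a i | i : 'I_h] by rewrite imS enum_valP.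
      case/imsetP => i _ ji; apply/existsP; exists i.
      by have := enum_valK_in (aS i) j; rewrite ffunE ji => ->.
    + by apply/ffunP => i; rewrite !ffunE (enum_rankK_in (aS i)).
  - rewrite inE => /forallP onto ->; apply/setP => x.
    apply/imsetP/idP => [[i _ ->] | xS]; first by rewrite ffunE enum_valP.
    have /existsP [i /eqP gi] := onto (enum_rank_in xS x).
    by exists i; rewrite // ffunE gi (enum_rankK_in xS).
rewrite card_imset // => g g' /ffunP eq_gg'; apply/ffunP => i.
by apply: enum_val_inj; have := eq_gg' i; rewrite !ffunE.
Qed.

Lemma sum_set_by_card (T : finType) (P : pred {set T}) (f : nat -> nat) :
  (\sum_(S | P S) f #|S| =
   \sum_(s < #|T|.+1) #|[set S | P S & #|S| == s]| * f s)%N.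
Proof.
rewrite (partition_big (fun S : {set T} => inord #|S| : 'I_#|T|.+1) xpredT) //.
have card_leT (S : {set T}) : (#|S| < #|T|.+1)%N by rewrite ltnS max_card.
apply: eq_bigr => s _; rewrite -sum_nat_const.
apply: eq_big => [S | S /andP [_ /eqP <-]]; last by rewrite inordK.
by rewrite inE -val_eqE /= inordK.
Qed.

Lemma card_set_pairs (T U : finType) (P : pred T) (R : T -> pred U) :
  #|[set p : T * U | P p.1 && R p.1 p.2]| = (\sum_(t | P t) #|[set u | R t u]|)%N.
Proof.
rewrite -sum1_card; symmetry; under eq_bigr do rewrite -sum1_card.
by rewrite pair_big_dep; apply: eq_bigl => p; rewrite !inE.
Qed.

Section OppositeFree.
Variable F : finFieldType.

Definition distinct_sums_nz (I : finType) (a : {ffun I -> F}) :=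
  [forall i, forall j, (i != j) ==> (a i + a j != 0)].

Definition sums_nz (I : finType) (a : {ffun I -> F}) :=
  [forall i, forall j, a i + a j != 0].

Definition opp_disjoint (S : {set F}) := [forall x in S, - x \notin S].

Definition opp_disjoint_ext (S : {set F}) :=
  [set x | [&& x != 0, x \notin S & - x \notin S]].

Definition n_opp_disjoint s := #|[set S : {set F} | opp_disjoint S & #|S| == s]|.

Lemma sums_nz_image (I : finType) (a : {ffun I -> F}) :
  sums_nz a = opp_disjoint [set a i | i : I].
Proof.
apply/forallP/forall_inP => [nz _ /imsetP [i _ ->] | disj i].
- apply/imsetP => -[j _ /eqP]; rewrite eqr_oppLR -addr_eq0.
  by have /forallP/(_ j)/negP := nz i.
- apply/forallP => j; rewrite addr_eq0 -eqr_oppLR; apply/eqP => eq_ij.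
  by have /negP := disj (a i) (imset_f _ isT); apply; rewrite eq_ij imset_f.
Qed.

Lemma opp_disjoint_setU1 x S :
  opp_disjoint (x |: S) = [&& - x != x, - x \notin S & opp_disjoint S].
Proof.
rewrite /opp_disjoint; apply/forall_inP/and3P => [disj | [xx xS /forall_inP disj]].
- have := disj x (setU11 x S); rewrite !inE negb_or => /andP [-> ->].
  split=> //; apply/forall_inP => y yS.
  by have := disj y (setU1r x yS); rewrite !inE negb_or => /andP [].
- move=> y; rewrite !inE => /orP [/eqP -> | yS]; first by rewrite negb_or xx.
  rewrite negb_or disj // andbT; apply: contra xS => /eqP <-.
  by rewrite opprK.
Qed.

Lemma opp_disjoint_notin0 S : opp_disjoint S -> 0 \notin S.
Proof.
by move=> /forall_inP disj; apply/negP => S0; have := disj 0 S0; rewrite oppr0 S0.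
Qed.

Lemma card_opp_disjoint_ext S : opp_disjoint S ->
  (#|opp_disjoint_ext S| + (2 * #|S|).+1)%N = #|F|.
Proof.
move=> disj; set N := [set x : F | - x \in S].
have cardN : #|N| = #|S|.
  by rewrite -(card_preimset S (@oppr_inj F)); apply: eq_card => x; rewrite !inE.
have SN0 : S :&: N = set0.
  apply/setP => x; rewrite !inE; apply/andP => -[xS].
  by move: disj => /forall_inP /(_ x xS) /negP.
have notin0 : 0 \notin S :|: N by rewrite !inE oppr0 orbb opp_disjoint_notin0.
have -> : opp_disjoint_ext S = ~: (0 |: (S :|: N)).
  by apply/setP => x; rewrite !inE !negb_or.
rewrite -[RHS](cardsC (0 |: (S :|: N))) addnC cardsU1 notin0 cardsU SN0 cards0.
by rewrite cardN subn0 add1n mul2n -addnn.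
Qed.

Lemma n_opp_disjoint0 : n_opp_disjoint 0 = 1%N.
Proof.
rewrite /n_opp_disjoint -(cards1 (set0 : {set F})); apply: eq_card => S.
rewrite !inE cards_eq0 andbC.
by case: eqP => [-> | //]; apply/forall_inP => x; rewrite inE.
Qed.

Lemma n_opp_disjoint_gt0 s : (0 < n_opp_disjoint s)%N -> ((2 * s).+1 <= #|F|)%N.
Proof.
case/card_gt0P => S; rewrite inE => /andP [disj /eqP <-].
by rewrite -(card_opp_disjoint_ext disj) leq_addl.
Qed.

Lemma card_sums_nz h : #|[set a : {ffun 'I_h -> F} | sums_nz a]| =
  (\sum_(s < #|F|.+1) n_opp_disjoint s * nsurj h s)%N.
Proof.
rewrite -sum1dep_card (partition_big (fun a : {ffun 'I_h -> F} => [set a i | i : 'I_h])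
  opp_disjoint) => [|a]; last by rewrite sums_nz_image.
rewrite -sum_set_by_card; apply: eq_bigr => S disjS.
rewrite -card_ffun_image -sum1dep_card; apply: eq_bigl => a.
by rewrite sums_nz_image; case: eqP => [-> | _]; rewrite ?andbF ?andbT.
Qed.

End OppositeFree.

Section OddCharacteristic.
Variable F : finFieldType.
Hypothesis two_nz : (2%:R : F) != 0.

Lemma addrr_eq0 (x : F) : (x + x == 0) = (x == 0).
Proof. by rewrite -mulr2n -mulr_natl mulf_eq0 (negbTE two_nz). Qed.

Lemma oppr_eq_self (x : F) : (- x == x) = (x == 0).
Proof. by rewrite eq_sym -addr_eq0 addrr_eq0. Qed.

(* Double counting of the pairs (S, x) with x \in S: removing x from S leaves
   a set of size s that x extends. *)
Lemma n_opp_disjointS s :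
  (n_opp_disjoint F s.+1 * s.+1 = n_opp_disjoint F s * (#|F| - (2 * s).+1))%N.
Proof.
pose X := [set p : {set F} * F | (opp_disjoint p.1 && (#|p.1| == s.+1)) && (p.2 \in p.1)].
pose Y := [set p : {set F} * F |
  (opp_disjoint p.1 && (#|p.1| == s)) && (p.2 \in opp_disjoint_ext p.1)].
have cardX : #|X| = (n_opp_disjoint F s.+1 * s.+1)%N.
  rewrite (card_set_pairs (fun S => opp_disjoint S && (#|S| == s.+1))
    (fun S x => x \in S)).
  rewrite /n_opp_disjoint -sum_nat_const.
  apply: eq_big => [S | S /andP [_ /eqP <-]]; first by rewrite inE.
  by apply: eq_card => x; rewrite inE.
have cardY : #|Y| = (n_opp_disjoint F s * (#|F| - (2 * s).+1))%N.
  rewrite (card_set_pairs (fun S => opp_disjoint S && (#|S| == s))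
    (fun S x => x \in opp_disjoint_ext S)).
  rewrite /n_opp_disjoint -sum_nat_const.
  apply: eq_big => [S | S /andP [disjS /eqP <-]]; first by rewrite inE.
  by rewrite -(card_opp_disjoint_ext disjS) addnK; apply: eq_card => x; rewrite inE.
have XE : X = (fun p => (p.2 |: p.1, p.2)) @: Y.
  apply/setP => -[S x]; apply/idP/imsetP.
  - rewrite inE /= => /andP [/andP [disjS /eqP cardS] xS].
    exists (S :\ x, x); last by rewrite /= setD1K.
    move: disjS; rewrite -{1}(setD1K xS) opp_disjoint_setU1 => /and3P [xx xSx disjSx].
    rewrite inE /= disjSx [x \in opp_disjoint_ext _]inE setD11 xSx -oppr_eq_self xx.
    by have := cardsD1 x S; rewrite xS cardS add1n => -[->]; rewrite eqxx.
  - case=> -[T y]; rewrite !inE /= => /andP [/andP [disjT /eqP cardT]].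
    case/and3P => y0 yT yT' [-> ->].
    rewrite opp_disjoint_setU1 oppr_eq_self y0 yT' disjT cardsU1 yT cardT.
    by rewrite setU11 add1n eqxx.
rewrite XE card_in_imset in cardX; first by rewrite -cardX cardY.
move=> [T x] [T' x']; rewrite !inE /=.
move=> /andP [_ /and3P [_ xT _]] /andP [_ /and3P [_ xT' _]].
by case=> eqT ex; subst x'; rewrite -(setU1K xT) eqT setU1K.
Qed.

Lemma n_opp_disjoint_fact s : (n_opp_disjoint F s)%:R * (s`!)%:R =
  \prod_(i < s) ((#|F|%:R : rat) - (2 * i + 1)%:R).
Proof.
elim: s => [|s IH]; first by rewrite n_opp_disjoint0 big_ord0 fact0 mulr1.
(* [n_opp_disjointS] subtracts in nat, which is harmless: n_opp_disjoint s = 0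
   as soon as q < 2s + 1. *)
have gapE : (n_opp_disjoint F s)%:R * ((#|F| - (2 * s).+1)%N)%:R =
    (n_opp_disjoint F s)%:R * (#|F|%:R - (2 * s + 1)%:R) :> rat.
  have [-> | /n_opp_disjoint_gt0 le_q] := posnP (n_opp_disjoint F s).
    by rewrite !mul0r.
  by rewrite natrB // addn1.
rewrite big_ord_recr /= -IH factS natrM mulrA -natrM n_opp_disjointS natrM gapE.
by rewrite mulrAC.
Qed.

Lemma card_sums_nz_Gamma h : (0 < h)%N ->
  (#|[set a : {ffun 'I_h -> F} | sums_nz a]|)%:R = Gamma h #|F|.
Proof.
move=> h_gt0; rewrite card_sums_nz natr_sum /Gamma.
set q := #|F|; set L := minn h ((q - 1) %/ 2).
have termE s : (\prod_(i < s) (q%:R - (2 * i + 1)%:R)) / (s`!)%:R * (nsurj h s)%:R =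
    ((n_opp_disjoint F s * nsurj h s)%N)%:R :> rat.
  by rewrite -n_opp_disjoint_fact mulfK ?natrM // pnatr_eq0 -lt0n fact_gt0.
(* The other terms vanish: no map onto the empty set or onto more than h
   points, and no opp-disjoint set of size s with q < 2s + 1. *)
under [RHS]eq_bigr => s _ do rewrite termE.
rewrite -(big_mkord xpredT (fun s => ((n_opp_disjoint F s * nsurj h s)%N)%:R)).
rewrite (big_cat_nat _ (n := 1)) //= big_nat1 nsurj0 // muln0 add0r.
rewrite (big_cat_nat _ (n := L.+1)) //=; last by rewrite /L; lia.
rewrite [X in _ + X]big1_seq ?addr0 // => s /andP [_]; rewrite mem_index_iota.
case/andP => Ls _; have [hs | sh] := ltnP h s; first by rewrite nsurj_small // muln0.
have : ~~ (0 < n_opp_disjoint F s)%N.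
  by apply/negP => /n_opp_disjoint_gt0; rewrite /L in Ls; lia.
by rewrite lt0n negbK => /eqP ->.
Qed.

Lemma sums_nz_distinct (I : finType) (a : {ffun I -> F}) :
  sums_nz a = distinct_sums_nz a && [forall i, a i != 0].
Proof.
apply/forallP/andP => [nz | [/forallP dist /forallP nz0] i].
- split; apply/forallP => i; last by have /forallP/(_ i) := nz i; rewrite addrr_eq0.
  by apply/forallP => j; apply/implyP => _; have /forallP := nz i.
- apply/forallP => j; have [<- | ne] := eqVneq i j; first by rewrite addrr_eq0.
  by have /forallP/(_ j)/implyP := dist i; apply.
Qed.

Lemma card_distinct_sums_nz_zero_at h (i : 'I_h.+1) :
  #|[set a : {ffun 'I_h.+1 -> F} | distinct_sums_nz a && (a i == 0)]| =
  #|[set b : {ffun 'I_h -> F} | sums_nz b]|.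
Proof.
pose ext (b : {ffun 'I_h -> F}) := [ffun j => if unlift i j is Some j' then b j' else 0].
have -> : [set a | distinct_sums_nz a && (a i == 0)] = ext @: [set b | sums_nz b].
  apply/setP => a; rewrite inE; apply/andP/imsetP => [[/forallP dist /eqP ai0] | [b]].
  - exists [ffun j' => a (lift i j')].
    + rewrite inE; apply/forallP => j1; apply/forallP => j2; rewrite !ffunE.
      have [<- | ne] := eqVneq j1 j2.
        have /forallP/(_ (lift i j1))/implyP := dist i.
        by rewrite neq_lift ai0 add0r -addrr_eq0; apply.
      have /forallP/(_ (lift i j2))/implyP := dist (lift i j1); apply.
      by rewrite (inj_eq (@lift_inj _ i)).
    + apply/ffunP => j; rewrite !ffunE.
      by case: unliftP => [j' -> | ->]; rewrite ?ffunE ?ai0.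
  - rewrite inE sums_nz_distinct => /andP [/forallP dist /forallP nz0] ->.
    split; last by rewrite ffunE unlift_none.
    apply/forallP => j1; apply/forallP => j2; apply/implyP; rewrite !ffunE.
    case: unliftP => [j1' -> | ->]; case: unliftP => [j2' -> | ->] => ne.
    + by have /forallP/(_ j2')/implyP := dist j1'; apply; apply: contraNneq ne => ->.
    + by rewrite addr0 nz0.
    + by rewrite add0r nz0.
    + by rewrite eqxx in ne.
rewrite card_imset // => b b' /ffunP eq_bb'; apply/ffunP => j'.
by have := eq_bb' (lift i j'); rewrite !ffunE liftK.
Qed.

Lemma card_distinct_sums_nz h :
  #|[set a : {ffun 'I_h.+1 -> F} | distinct_sums_nz a]| =
  (#|[set a : {ffun 'I_h.+1 -> F} | sums_nz a]| +
   h.+1 * #|[set b : {ffun 'I_h -> F} | sums_nz b]|)%N.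
Proof.
have cardE (T : finType) (P : pred T) : #|[set x | P x]| = (\sum_x P x)%N.
  by rewrite -sum1dep_card big_mkcond; apply: eq_bigr => x _; case: (P x).
have -> : (h.+1 * #|[set b : {ffun 'I_h -> F} | sums_nz b]| =
    \sum_(i < h.+1)
      #|[set a : {ffun 'I_h.+1 -> F} | distinct_sums_nz a && (a i == 0%R)]|)%N.
  rewrite (eq_bigr _ (fun i _ => card_distinct_sums_nz_zero_at i)).
  by rewrite big_const_ord iter_addn_0 mulnC.
under eq_bigr do rewrite cardE; rewrite !cardE exchange_big -big_split /=.
apply: eq_bigr => a _; rewrite sums_nz_distinct.
case dist: (distinct_sums_nz a); last by rewrite big1.
(* a has at most one zero value, since two zeros would sum to 0. *)
have [nz | /forallPn [i /negPn /eqP ai0]] /= := boolP [forall i, a i != 0].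
  by rewrite big1 // => i _; rewrite (negbTE (forallP nz i)).
rewrite (bigD1 i) //= ai0 eqxx big1 // => j ne.
move/forallP/(_ i)/forallP/(_ j)/implyP: dist; rewrite eq_sym ai0 add0r => /(_ ne).
by move/negbTE ->.
Qed.

Lemma natr_card_distinct_sums_nz h : (1 < h)%N ->
  (#|[set a : {ffun 'I_h -> F} | distinct_sums_nz a]|)%:R =
  Gamma h #|F| + h%:R * Gamma (h - 1) #|F|.
Proof.
case: h => [|h] // h_gt0.
by rewrite card_distinct_sums_nz natrD natrM !card_sums_nz_Gamma // subn1.
Qed.

End OddCharacteristic.

Lemma card_distinct_sums_nz_char2 (F : finFieldType) (I : finType) :
  (2%:R : F) = 0 -> #|[set a : {ffun I -> F} | distinct_sums_nz a]| = #|F| ^_ #|I|.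
Proof.
move=> two0; rewrite -card_inj_ffuns; apply: eq_card => a; rewrite !inE.
have addr_eq0_char2 (x y : F) : (x + y == 0) = (x == y).
  suff oppyE : - y = y by rewrite addr_eq0 oppyE.
  by apply/eqP; rewrite eq_sym -addr_eq0 -mulr2n -mulr_natr two0 mulr0.
apply/forallP/injectiveP => [dist i j eq_ij | inj_a i].
  apply/eqP; have [// | ne] := eqVneq i j.
  by move: (dist i) => /forallP/(_ j); rewrite ne eq_ij addr_eq0_char2 eqxx.
apply/forallP => j; apply/implyP; apply: contraNN.
by rewrite addr_eq0_char2 => /eqP /inj_a ->.
Qed.

Lemma natr_ffact (R : pzRingType) n m : ((n ^_ m)%:R : R) = \prod_(i < m) (n%:R - i%:R).
Proof.
elim: m => [|m IH]; first by rewrite ffactn0 big_ord0.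
rewrite ffactnSr big_ord_recr /= -IH natrM.
have [le_mn | lt_nm] := leqP m n; first by rewrite natrB.
by rewrite ffact_small // !mul0r.
Qed.

Section CodeLength.
Variable F : finFieldType.

Lemma D2_prod_eq0 n h (x : 'rV[F]_(h + n)) :
  (\prod_(i : 'I_(h + n)) \prod_(j : 'I_(h + n) | (i < j)%N && (j < h)%N)
     (x 0 i + x 0 j) == 0) = ~~ distinct_sums_nz [ffun i => lsubmx x 0 i].
Proof.
apply/prodf_eq0/forallPn => [[i _ /prodf_eq0 [j /andP [lt_ij lt_jh] sum0]] |].
  have lt_ih : (i < h)%N := ltn_trans lt_ij lt_jh.
  exists (Ordinal lt_ih); apply/forallPn; exists (Ordinal lt_jh).
  rewrite negb_imply negbK -val_eqE /= neq_ltn lt_ij !ffunE !mxE.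
  have -> : lshift n (Ordinal lt_ih) = i by apply/val_inj.
  by have -> : lshift n (Ordinal lt_jh) = j by apply/val_inj.
case=> i /forallPn [j]; rewrite negb_imply negbK !ffunE !mxE => /andP [ne_ij sum0].
wlog lt_ij : i j ne_ij sum0 / (i < j)%N => [sym|].
  have [lt_ij | lt_ji | eq_ij] := ltngtP i j; first exact: sym i j ne_ij sum0 lt_ij.
    by apply: (sym j i _ _ lt_ji); [rewrite eq_sym | rewrite addrC].
  by move/eqP: ne_ij; case; apply/val_inj.
exists (lshift n i) => //; apply/prodf_eq0; exists (lshift n j) => //=.
by rewrite lt_ij ltn_ord.
Qed.

Lemma card_D2 k h : (1 < h <= k)%N ->
  (#|D2 F k h| + #|F| ^ (k - h) * #|[set a : {ffun 'I_h -> F} | distinct_sums_nz a]| + 1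
   = #|F| ^ k)%N.
Proof.
case/andP => h_gt1 le_hk; set n := (k - h)%N.
have -> : k = (h + n)%N by rewrite subnKC.
pose good := [set x : 'rV[F]_(h + n) | distinct_sums_nz [ffun i => lsubmx x 0 i]].
have -> : D2 F (h + n) h = ~: good :\ 0.
  by apply/setP => x; rewrite !inE D2_prod_eq0 andbC.
have bad0 : (0 : 'rV[F]_(h + n)) \in ~: good.
  rewrite !inE; apply/forallPn; exists (Ordinal (ltnW h_gt1)); apply/forallPn.
  by exists (Ordinal h_gt1); rewrite !ffunE !mxE addr0 eqxx.
have card_good : #|good| =
    (#|F| ^ n * #|[set a : {ffun 'I_h -> F} | distinct_sums_nz a]|)%N.
  by rewrite (card_lsubmx_pred n (fun u : 'rV_h => distinct_sums_nz [ffun i => u 0 i]))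
    card_row_ffun_pred.
have le_good : (#|good| <= #|F| ^ (h + n))%N.
  by apply: leq_trans (max_card _) _; rewrite card_mx mul1n.
have := cardsD1 (0 : 'rV[F]_(h + n)) (~: good).
rewrite bad0 cardsCs setCK card_mx mul1n card_good; rewrite card_good in le_good.
by move=> E; rewrite -(subnK le_good) E addnAC addn1.
Qed.

Lemma natr_card_D2 k h : (1 < h <= k)%N ->
  (#|D2 F k h|%:R : rat) = (#|F| ^ (k - h))%:R *
    ((#|F| ^ h)%:R - (#|[set a : {ffun 'I_h -> F} | distinct_sums_nz a]|)%:R) - 1.
Proof.
move=> hk; rewrite mulrBr -natrM -expnD subnK; last by case/andP: hk.
have := congr1 (GRing.natmul (1 : rat)) (card_D2 hk).
by rewrite !natrD natrM => <-; ring.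
Qed.

End CodeLength.

Theorem proposition3p1 (F : finFieldType) (p m k h : nat)
  (hp : prime p) (hm : (0 < m)%N) (hq : #|F| = (p ^ m)%N)
  (h3 : (3 <= h)%N) (hk : (h <= k)%N) :
  let q := (p ^ m)%N in
  let n : rat := (code_length (D2 F k h))%:R in
  [/\ (p = 2)%N -> (h <= q)%N ->
        n = (q ^ (k - h))%:R * ((q ^ h)%:R - \prod_(i < h) ((q%:R : rat) - i%:R)) - 1,
      (p = 2)%N -> (q < h)%N -> n = (q ^ k)%:R - 1
    & (2 < p)%N ->
        n = (q ^ (k - h))%:R * ((q ^ h)%:R - Gamma h q - h%:R * Gamma (h - 1) q) - 1].
Proof.
move=> q n; rewrite {}/n {}/q.
have chp : p \in [pchar F] := card_finPcharP hq hp.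
rewrite /code_length natr_card_D2 ?hk ?(ltnW h3) // hq.
have two0 : p = 2%N -> (2%:R : F) = 0 by move=> p2; rewrite -p2 pcharf0.
split => [p2 le_hq | p2 lt_qh | p_gt2].
- by rewrite card_distinct_sums_nz_char2 ?two0 // card_ord hq natr_ffact.
- rewrite card_distinct_sums_nz_char2 ?two0 // card_ord hq ffact_small //.
  by rewrite mulr0n subr0 -natrM -expnD subnK.
- have two_nz : (2%:R : F) != 0.
    by rewrite -(dvdn_pcharf chp); apply/negP => /dvdn_leq; lia.
  by rewrite natr_card_distinct_sums_nz ?hq ?(ltnW h3) // opprD addrA.
Qed.
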